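(* Let $n\ge1$ and $A$ a nonempty finite set. A graph $g\in\mathscr G_n(A)$ lies in the image of $\mu\colon\mathscr M_n(A)\to\mathscr G_n(A)$ if and only if for every directed path $a_0\to a_1\to\dots\to a_k$ in $g$ with $k\ge1$ there exists an index $0\le i<k$ such that all edges $a_p\to a_q$ with $p\le i<q$ have the same weight.
   Context: $\mathscr M_n(A)$: equivalence classes of planar rooted trees with leaf set $A$ and vertices labelled by $1,\dots,n$, modulo: all stumps equivalent; non-root stumps removable; edges between equally labelled vertices contractible; unary vertices removable. $\mathscr G_n(A)$ is the set of acyclic complete directed graphs on $A$ with weights in $\{1,\dots,n\}$ (each two-element subset carries exactly one directed weighted edge, and the directions form a linear order). $\mu(T)$ is the graph with edge $a\to b$ iff $a$ precedes $b$ in the planar order of the leaves of $T$, weighted by the label of the lowest vertex on the path from $a$ to $b$ in $T$. *)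

From mathcomp Require Import all_boot.
Set Implicit Arguments. Unset Strict Implicit. Unset Printing Implicit Defensive.

(* Planar rooted trees: leaves carry elements of A; every (non-leaf) vertex
   carries a label (intended to lie in {1,...,n}); the children of a vertex
   are ordered (planar structure). *)
Inductive ptree (A : Type) : Type :=
| Leaf of A
| Node of nat & seq (ptree A).

Arguments Leaf {A} _.
Arguments Node {A} _ _.

Section Trees.
Variable A : finType.

Fixpoint leaves (t : ptree A) : seq A :=
  match t with
  | Leaf a => [:: a]
  | Node _ ts => flatten (map leaves ts)
  end.

Fixpoint labels_ok (n : nat) (t : ptree A) : bool :=
  match t with
  | Leaf _ => true
  | Node l ts => (1 <= l <= n) && all (labels_ok n) ts
  end.

Definition is_tree (n : nat) (t : ptree A) : bool :=
  labels_ok n t && uniq (leaves t) && perm_eq (leaves t) (enum A).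

Fixpoint lca_label (t : ptree A) (a b : A) : nat :=
  match t with
  | Leaf _ => 0
  | Node l ts =>
      (fix go (us : seq (ptree A)) : nat :=
         match us with
         | [::] => l
         | u :: us' =>
             if (a \in leaves u) && (b \in leaves u) then lca_label u a b
             else go us'
         end) ts
  end.

(* A weighted directed graph on A: g a b = Some k iff there is an edge a -> b
   of weight k, and g a b = None iff there is no edge a -> b. *)
Definition wgraph := A -> A -> option nat.

(* membership in G_n(A): acyclic complete directed graph with weights in 1..n *)
Definition in_G (n : nat) (g : wgraph) : Prop :=
  [/\ forall a, g a a = None,
      forall a b, a != b -> (g a b != None) (+) (g b a != None),
      forall a b k, g a b = Some k -> 1 <= k <= n
    & forall a b c, g a b != None -> g b c != None -> g a c != None].

Definition mu (t : ptree A) : wgraph :=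
  fun a b =>
    if a == b then None
    else if index a (leaves t) < index b (leaves t)
         then Some (lca_label t a b) else None.

Definition in_image_mu (n : nat) (g : wgraph) : Prop :=
  exists t : ptree A, is_tree n t /\ forall a b, mu t a b = g a b.

Definition path_condition (g : wgraph) : Prop :=
  forall (k : nat) (p : nat -> A), 1 <= k ->
    (forall j, j < k -> g (p j) (p j.+1) != None) ->
    exists2 i, i < k &
      exists c, forall x y, x <= i -> i < y -> y <= k -> g (p x) (p y) = Some c.

End Trees.

From mathcomp Require Import all_boot zify.
Set Implicit Arguments. Unset Strict Implicit. Unset Printing Implicit Defensive.

(* If mu t = g, let a_0 -> ... -> a_k be a path, i.e. leaves in increasing
   planar order, and let v be the lowest vertex above all of them.  The path
   leaves the child of v containing a_0 at some step i, and every edge crossing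
   that step has its lowest vertex at v, hence the label of v as weight.
   Conversely, list A in the linear order given by g; the path condition
   applied to the whole list provides a cut, the two halves are realised
   recursively and grafted under a root labelled by the common weight across
   the cut. *)

Lemma index_cat_ltn_size (T : eqType) (s1 s2 : seq T) (x : T) :
  (index x (s1 ++ s2) < size s1) = (x \in s1).
Proof.
rewrite index_cat; case: ifP => [x_s1|_]; first by rewrite index_mem.
by rewrite ltnNge leq_addr.
Qed.

Lemma pairwise_index_ltn (T : eqType) (r : rel T) (s : seq T) (a b : T) :
  pairwise r s -> b \in s -> index a s < index b s -> r a b.
Proof.
move=> /(pairwiseP a) r_s b_s ab.
have a_s : a \in s by rewrite -index_mem (ltn_trans ab) ?index_mem.
by have := r_s (index a s) (index b s); rewrite !inE !index_mem !nth_index //; apply.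
Qed.

Lemma allrel_take_drop (T : eqType) (r : rel T) (x0 : T) (s : seq T) (m : nat) :
  (forall x y, x < m -> m <= y -> y < size s -> r (nth x0 s x) (nth x0 s y)) ->
  allrel r (take m s) (drop m s).
Proof.
move=> r_cut; apply/allrelP => a b a_take b_drop.
have := a_take; rewrite -index_mem size_take_min => ia.
have := b_drop; rewrite -index_mem size_drop => ib.
rewrite -(nth_index x0 a_take) -(nth_index x0 b_drop) nth_take ?nth_drop; last lia.
apply: r_cut; lia.
Qed.

Lemma threshold_crossing (q : nat -> nat) (T k : nat) :
  q 0 < T -> T <= q k -> exists2 i, i < k & q i < T <= q i.+1.
Proof.
elim: k => [|k IHk] q0_T T_qk; first lia.
case: (leqP T (q k)) => [T_qk'|qk_T]; last by exists k => //; rewrite qk_T.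
by have [i ik crosses] := IHk q0_T T_qk'; exists i => //; apply: ltnW.
Qed.

Lemma ltn_steps (f : nat -> nat) (k : nat) :
  (forall j, j < k -> f j < f j.+1) -> forall x y, x < y <= k -> f x < f y.
Proof.
move=> steps x; elim=> [//|y IHy] /andP[xy yk].
rewrite ltnS leq_eqVlt in xy; case/orP: xy => [/eqP->|xy]; first exact: steps.
by rewrite (ltn_trans (IHy _)) ?steps // xy ltnW.
Qed.

Section Trees.
Variable A : finType.
Implicit Types (t u : ptree A) (ts : seq (ptree A)) (a b : A).

Fixpoint ptree_ind_in (P : ptree A -> Prop) (P_Leaf : forall a, P (Leaf a))
    (P_Node : forall l ts, (forall u, List.In u ts -> P u) -> P (Node l ts)) t : P t :=
  match t with
  | Leaf a => P_Leaf a
  | Node l ts => P_Node l ts ((fix in_ts ts : forall u, List.In u ts -> P u :=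
      match ts with
      | [::] => fun u (u_in : False) => False_ind (P u) u_in
      | v :: vs => fun u u_in => match u_in with
          | or_introl v_u => eq_ind v P (ptree_ind_in P_Leaf P_Node v) u v_u
          | or_intror u_vs => in_ts vs u u_vs end
      end) ts)
  end.

Lemma lca_label_cons l u ts a b :
  lca_label (Node l (u :: ts)) a b =
  if (a \in leaves u) && (b \in leaves u) then lca_label u a b
  else lca_label (Node l ts) a b.
Proof. by []. Qed.

Lemma lca_label_root l ts a b :
  a \notin leaves (Node l ts) -> lca_label (Node l ts) a b = l.
Proof.
elim: ts => [//|u ts IHts]; rewrite lca_label_cons /= mem_cat negb_or.
by case/andP=> /negbTE-> /IHts.
Qed.

Definition lca_cuts t : Prop :=
  uniq (leaves t) -> forall k (p : nat -> A), 0 < k ->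
  (forall x y, x < y <= k -> index (p x) (leaves t) < index (p y) (leaves t)) ->
  exists2 i, i < k & exists c, forall x y, x <= i -> i < y -> y <= k ->
    lca_label t (p x) (p y) = c.

Lemma lca_cuts_nil l : lca_cuts (Node l [::]).
Proof. by move=> _ k p k_gt0 /(_ 0 k); rewrite k_gt0 leqnn ltnn => /(_ isT). Qed.

Lemma lca_cuts_cons l u ts :
  lca_cuts u -> lca_cuts (Node l ts) -> lca_cuts (Node l (u :: ts)).
Proof.
set L := leaves (Node l ts) => cuts_u cuts_L.
rewrite /lca_cuts [leaves _]/= -/L cat_uniq => /and3P[uniq_u u'L uniq_L] k p k_gt0 incr.
pose q j := index (p j) (leaves u ++ L).
have mono x y : x <= y -> y <= k -> q x <= q y.
  by rewrite leq_eqVlt => /orP[/eqP->//|xy yk]; apply/ltnW/incr; rewrite xy.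
have in_u j : (p j \in leaves u) = (q j < size (leaves u)).
  by rewrite index_cat_ltn_size.
have q_u j : p j \in leaves u -> q j = index (p j) (leaves u).
  by rewrite /q index_cat => ->.
have q_L j : p j \notin leaves u -> q j = size (leaves u) + index (p j) L.
  by rewrite /q index_cat => /negbTE->.
case: (boolP (p 0 \in leaves u)) => [p0_u | p0'u]; last first.
  have p'u j : j <= k -> p j \notin leaves u.
    by move=> jk; rewrite in_u -leqNgt (leq_trans _ (mono 0 j _ jk)) ?q_L ?leq_addr.
  have incr_L x y : x < y <= k -> index (p x) L < index (p y) L.
    move=> xyk; have := incr x y xyk; case/andP: xyk => xy yk.
    by rewrite -/(q x) -/(q y) !q_L ?p'u ?ltn_add2l //; lia.
  have [i ik [c cut]] := cuts_L uniq_L k p k_gt0 incr_L.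
  exists i => //; exists c => x y xi iy yk.
  by rewrite lca_label_cons (negbTE (p'u x _)) ?cut //; lia.
case: (boolP (p k \in leaves u)) => [pk_u | pk'u].
  have p_u j : j <= k -> p j \in leaves u.
    by move=> jk; rewrite in_u (leq_ltn_trans (mono j k jk _)) -?in_u.
  have incr_u x y : x < y <= k -> index (p x) (leaves u) < index (p y) (leaves u).
    by move=> xyk; rewrite -!q_u ?p_u ?incr //; case/andP: xyk => *; lia.
  have [i ik [c cut]] := cuts_u uniq_u k p k_gt0 incr_u.
  exists i => //; exists c => x y xi iy yk.
  by rewrite lca_label_cons !p_u ?cut //; lia.
(* The path leaves u at some step i; edges across it meet only at the root. *)
have q0_u : q 0 < size (leaves u) by rewrite -in_u.
have u_qk : size (leaves u) <= q k by rewrite leqNgt -in_u.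
have [i ik /andP[qi_u u_qi1]] := threshold_crossing q0_u u_qk.
exists i => //; exists l => x y xi iy yk.
have px_u : p x \in leaves u by rewrite in_u (leq_ltn_trans (mono x i _ _)) //; lia.
have py'u : p y \notin leaves u by rewrite in_u -leqNgt (leq_trans u_qi1) ?mono.
rewrite lca_label_cons (negbTE py'u) andbF lca_label_root //.
by apply: contraL px_u; apply: (hasPn u'L).
Qed.

Lemma tree_lca_cuts t : lca_cuts t.
Proof.
elim/ptree_ind_in: t => [a|l ts cuts_ts].
  by move=> _ k p k_gt0 _; exists 0 => //; exists 0.
elim: ts cuts_ts => [_|u ts IHts cuts_ts]; first exact: lca_cuts_nil.
apply: lca_cuts_cons; first exact: cuts_ts (or_introl erefl).
by apply: IHts => v v_ts; apply: cuts_ts; right.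
Qed.

Lemma mu_index_ltn t a b :
  index a (leaves t) < index b (leaves t) -> mu t a b = Some (lca_label t a b).
Proof.
by move=> ab; rewrite /mu ab; case: eqVneq => // a_b; rewrite a_b ltnn in ab.
Qed.

Lemma mu_neq_None t a b :
  (mu t a b != None) = (index a (leaves t) < index b (leaves t)).
Proof. by rewrite /mu; case: (eqVneq a b) => [->|_]; rewrite ?ltnn //; case: ifP. Qed.

Lemma eq_path_condition (g g' : wgraph A) :
  (forall a b, g a b = g' a b) -> path_condition g -> path_condition g'.
Proof.
move=> eq_g cuts k p k_gt0 edges.
have [|i ik [c cut]] := cuts k p k_gt0; first by move=> j jk; rewrite eq_g edges.
by exists i => //; exists c => x y xi iy yk; rewrite -eq_g cut.
Qed.

Lemma path_condition_mu t : uniq (leaves t) -> path_condition (mu t).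
Proof.
move=> uniq_t k p k_gt0 edges.
have incr x y : x < y <= k -> index (p x) (leaves t) < index (p y) (leaves t).
  by apply: (ltn_steps (f := fun j => index (p j) (leaves t))) => j jk;
    rewrite -mu_neq_None edges.
have [i ik [c cut]] := tree_lca_cuts uniq_t k_gt0 incr.
exists i => //; exists c => x y xi iy yk.
by rewrite mu_index_ltn ?cut // incr //; apply/andP; split=> //; lia.
Qed.

Lemma pairwise_lca_Node (g : wgraph A) c t1 t2 :
  uniq (leaves t1 ++ leaves t2) ->
  allrel (fun a b => g a b == Some c) (leaves t1) (leaves t2) ->
  pairwise (fun a b => g a b == Some (lca_label t1 a b)) (leaves t1) ->
  pairwise (fun a b => g a b == Some (lca_label t2 a b)) (leaves t2) ->
  pairwise (fun a b => g a b == Some (lca_label (Node c [:: t1; t2]) a b))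
    (leaves t1 ++ leaves t2).
Proof.
rewrite cat_uniq => /and3P[_ disj _] across in_t1 in_t2.
have t2'_t1 : {in leaves t2, forall a, a \notin leaves t1} by apply/hasPn.
have t1'_t2 a : a \in leaves t1 -> a \notin leaves t2.
  by apply: contraL => /t2'_t1.
rewrite pairwise_cat; apply/and3P; split.
- apply: sub_in_allrel (allss _) (allss _) across => a b a_t1 b_t2 /eqP-> /=.
  by rewrite (negbTE (t2'_t1 b b_t2)) andbF (negbTE (t1'_t2 a a_t1)).
- apply: sub_in_pairwise (allss _) in_t1 => a b a_t1 b_t1 /=.
  by rewrite a_t1 b_t1.
- apply: sub_in_pairwise (allss _) in_t2 => a b a_t2 b_t2 /=.
  by rewrite (negbTE (t2'_t1 a a_t2)) a_t2 b_t2.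
Qed.

Lemma tree_of_chain (n : nat) (g : wgraph A) (s : seq A) :
  (forall a b k, g a b = Some k -> 1 <= k <= n) -> path_condition g ->
  s != [::] -> uniq s -> pairwise (fun a b => g a b != None) s ->
  exists t, [/\ labels_ok n t, leaves t = s &
    pairwise (fun a b => g a b == Some (lca_label t a b)) s].
Proof.
move=> g_weights cuts; have [m] := ubnP (size s); elim: m s => // m IHm.
case=> [//|x0 s0]; set s := x0 :: s0 => /ltnSE size_s _ uniq_s chain_s.
have size_sE : size s = (size s0).+1 by [].
have [s0_nil|k_gt0] := posnP (size s0).
  by exists (Leaf x0); rewrite /s (size0nil s0_nil).
have [|i ik [c cut]] := cuts (size s0) (nth x0 s) k_gt0.
  by move=> j jk; apply: (pairwiseP x0 chain_s) => //; rewrite inE /=; lia.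
have s_cut : s = take i.+1 s ++ drop i.+1 s by rewrite cat_take_drop.
have chain1 := subseq_pairwise (take_subseq s i.+1) chain_s.
have chain2 := subseq_pairwise (drop_subseq s i.+1) chain_s.
have [||t1 [ok1 leaves1 lca1]] := IHm _ _ _ (take_uniq i.+1 uniq_s) chain1 => //.
  by rewrite size_take_min; lia.
have [||t2 [ok2 leaves2 lca2]] := IHm _ _ _ (drop_uniq i.+1 uniq_s) chain2.
- by rewrite size_drop; lia.
- by rewrite -size_eq0 size_drop /=; lia.
exists (Node c [:: t1; t2]); split.
- by rewrite /= ok1 ok2 (g_weights _ _ _ (cut 0 (size s0) _ _ _)).
- by rewrite /= leaves1 leaves2 cats0 -s_cut.
have -> : s = leaves t1 ++ leaves t2 by rewrite leaves1 leaves2 -s_cut.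
apply: pairwise_lca_Node; rewrite ?leaves1 ?leaves2 -?s_cut //.
by apply: allrel_take_drop => x y xi iy ys; apply/eqP/cut => //; rewrite /= in ys; lia.
Qed.

Lemma in_G_chain_enum (n : nat) (g : wgraph A) :
  in_G n g -> exists2 s, perm_eq s (enum A) & pairwise (fun a b => g a b != None) s.
Proof.
case=> _ g_xor _ g_trans.
pose le a b := (a == b) || (g a b != None).
have le_total : total le.
  move=> a b; rewrite /le; case: (eqVneq a b) => [->|a_b]; rewrite ?eqxx //=.
  by move: (g_xor a b a_b); case: (g a b) => [?|]; case: (g b a).
have le_trans : transitive le.
  move=> b a c; rewrite /le => /orP[/eqP->|ab] //.
  case/orP=> [/eqP<-|bc]; first by rewrite ab orbT.
  by rewrite (g_trans _ _ _ ab bc) orbT.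
exists (sort le (enum A)); first by rewrite perm_sort.
have : pairwise [rel a b | le a b && (a != b)] (sort le (enum A)).
  rewrite pairwise_relI -sorted_pairwise ?sort_sorted //.
  by rewrite -uniq_pairwise sort_uniq enum_uniq.
by apply: sub_pairwise => a b /andP[/orP[/eqP->|//]]; rewrite eqxx.
Qed.

Lemma path_condition_in_image_mu (n : nat) (g : wgraph A) (x0 : A) :
  in_G n g -> path_condition g -> in_image_mu n g.
Proof.
move=> g_G cuts; have [s s_enum chain_s] := in_G_chain_enum g_G.
case: g_G => g_irr g_xor g_weights _.
have s_A a : a \in s by rewrite (perm_mem s_enum) mem_enum.
have uniq_s : uniq s by rewrite (perm_uniq s_enum) enum_uniq.
have s_nil : s != [::] by apply: contraTneq (s_A x0) => ->.
have [t [ok_t leaves_t lca_t]] := tree_of_chain g_weights cuts s_nil uniq_s chain_s.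
exists t; split; first by rewrite /is_tree ok_t leaves_t uniq_s s_enum.
move=> a b; rewrite /mu leaves_t.
case: (eqVneq a b) => [<-|a_b]; first by rewrite g_irr.
case: ltngtP => [ab|ba|/(index_inj a (s_A a) (s_A b))/eqP]; last by rewrite (negbTE a_b).
- by rewrite (eqP (pairwise_index_ltn lca_t (s_A b) ab)).
- move: (g_xor a b a_b); rewrite (pairwise_index_ltn chain_s (s_A a) ba).
  by case: (g a b).
Qed.

End Trees.

Theorem mainTheorem17 (n : nat) (A : finType) (g : wgraph A) :
  1 <= n -> 0 < #|A| -> in_G n g ->
  (in_image_mu n g <-> path_condition g).
Proof.
move=> _ /card_gt0P[x0 _] g_G; split; last exact: path_condition_in_image_mu.
case=> t [/andP[/andP[_ uniq_t] _] mu_g].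
exact: eq_path_condition mu_g (path_condition_mu uniq_t).
Qed.
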